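(* Let $\Sigma$ be a finite connected multigraph (loops allowed) and $\varphi\colon V(\Sigma)\to\mathbb{R}$. Then \[\max_v\varphi(v)-\min_v\varphi(v)\le M(\Delta(\varphi))\cdot\operatorname{diam}(\Sigma).\]
   Context: For $\varphi\colon V(\Sigma)\to\mathbb{R}$, the Laplacian is the divisor (real-valued function on vertices) $\Delta(\varphi)(v)=\sum_{e=vw}(\varphi(v)-\varphi(w))$, the sum over edges $e$ incident to $v$ with other endpoint $w$ (loops contribute $0$). For $f\colon V(\Sigma)\to\mathbb{R}$, $M(f)=\max_{S\subseteq V(\Sigma)}\left|\sum_{v\in S}f(v)\right|$. $\operatorname{diam}(\Sigma)$ is the maximum over pairs of vertices of the number of edges in a shortest path joining them. *)

From HB Require Import structures.
From mathcomp Require Import all_boot all_order all_algebra.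
Set Implicit Arguments. Unset Strict Implicit. Unset Printing Implicit Defensive.
Import Order.TTheory GRing.Theory Num.Theory.

(* A finite multigraph (loops and parallel edges allowed) is given by a
   finite vertex type V, a finite edge type E and the two endpoints
   src e, tgt e of each edge e (orientation is irrelevant below). *)

Section Multigraph.
Variables (V E : finType) (src tgt : E -> V).

Definition adj : rel V :=
  fun u w => [exists e : E, ((src e == u) && (tgt e == w))
                          || ((src e == w) && (tgt e == u))].

Definition connected_mg : Prop := forall u w : V, connect adj u w.

Definition walk_of_len (u w : V) (n : nat) : bool :=
  [exists t : n.-tuple V, path adj u t && (last u t == w)].

(* graph distance: least number of edges of a walk (equivalently of a
   path) from u to w; in a connected graph a shortest path has fewer
   than #|V| edges, so searching n in [0, #|V|) suffices. *)
Definition gdist (u w : V) : nat :=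
  find (walk_of_len u w) (iota 0 #|V|).

Definition diam : nat := \max_(u : V) \max_(w : V) gdist u w.

Local Open Scope ring_scope.
Variable R : realFieldType.

(* Laplacian: Delta(phi)(v) = sum over edges e incident to v, with other
   endpoint w, of (phi v - phi w); loops contribute 0. *)
Definition laplacian (phi : V -> R) (v : V) : R :=
  \sum_(e : E | src e == v) (phi v - phi (tgt e))
  + \sum_(e : E | (tgt e == v) && (src e != v)) (phi v - phi (src e)).

Definition Mnorm (f : V -> R) : R :=
  \big[Num.max/0]_(S : {set V}) `|\sum_(v in S) f v|.

End Multigraph.

From HB Require Import structures.
From mathcomp Require Import all_boot all_order all_algebra.
Set Implicit Arguments. Unset Strict Implicit. Unset Printing Implicit Defensive.
Import Order.TTheory GRing.Theory Num.Theory.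
Local Open Scope ring_scope.

(* It suffices to bound phi a - phi b by M(Delta phi) across a single edge ab
   and to sum along a shortest path.  For an edge with phi a > phi b, take the
   superlevel set S = {v | phi v >= phi a}: summing Delta phi over S, every edge
   contributes phi x - phi y with x in S, which is >= 0 when y is outside S and
   cancels against the opposite contribution when y is in S.  The edge ab itself
   contributes phi a - phi b, so this difference is at most |sum_S Delta phi|. *)

Section Mnorm.
Variables (R : realFieldType) (V : finType).

Lemma Mnorm_ge0 (f : V -> R) : 0 <= Mnorm f.
Proof.
by apply: (big_ind (fun x => 0 <= x)) => // x y x0 _; rewrite le_max x0.
Qed.

Lemma Mnorm_ge_sum (f : V -> R) (S : {set V}) :
  `|\sum_(v in S) f v| <= Mnorm f.
Proof.
rewrite /Mnorm; move: (mem_index_enum S); elim: (index_enum _) => // T r IH.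
by rewrite inE big_cons le_max => /orP[/eqP-> | /IH->]; rewrite ?lexx ?orbT.
Qed.

End Mnorm.

Section Laplacian.
Variables (R : realFieldType) (V E : finType) (src tgt : E -> V).
Implicit Types (phi : V -> R) (S : {set V}).

Lemma sum_in_pred1 S (a : V) (c : R) :
  \sum_(v in S | a == v) c = if a \in S then c else 0.
Proof.
rewrite big_mkcond (bigD1 a) //= big1 ?addr0 ?eqxx ?andbT // => v /negPf va.
by rewrite eq_sym va andbF.
Qed.

Definition edge_flow phi S (e : E) : R :=
  (if src e \in S then phi (src e) - phi (tgt e) else 0)
  + (if (tgt e \in S) && (src e != tgt e) then phi (tgt e) - phi (src e) else 0).

Lemma sum_laplacian phi S :
  \sum_(v in S) laplacian src tgt phi v = \sum_e edge_flow phi S e.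
Proof.
rewrite /laplacian big_split /= [RHS]big_split /=; congr (_ + _).
  rewrite (eq_bigr (fun v => \sum_(e | src e == v) (phi (src e) - phi (tgt e))));
    last by move=> v _; apply: eq_bigr => e /eqP ->.
  rewrite (exchange_big_dep xpredT) //=; apply: eq_bigr => e _.
  exact: sum_in_pred1.
rewrite (eq_bigr (fun v =>
  \sum_(e | (tgt e == v) && (src e != tgt e)) (phi (tgt e) - phi (src e))));
  last first.
  move=> v _; rewrite (eq_bigl (fun e => (tgt e == v) && (src e != tgt e))).
    by apply: eq_bigr => e /andP[/eqP -> _].
  by move=> e; case: eqP => // ->.
rewrite (exchange_big_dep xpredT) //=; apply: eq_bigr => e _.
have [loop | _] := eqVneq (src e) (tgt e).
  by rewrite andbF big_mkcond big1 // => v _; rewrite !andbF.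
rewrite andbT; under eq_bigl => v do rewrite andbT.
exact: sum_in_pred1.
Qed.

Definition superlevel phi (c : R) : {set V} := [set v | c <= phi v].

Lemma edge_flow_superlevel_ge0 phi c e : 0 <= edge_flow phi (superlevel phi c) e.
Proof.
rewrite /edge_flow !inE.
have [cs|sc] := lerP c (phi (src e)); have [ct|tc] := lerP c (phi (tgt e)) => /=.
- by case: eqVneq => [->|_]; rewrite ?subrr ?addr0 // addrC subrKA subrr.
- by rewrite addr0 subr_ge0 ltW // (lt_le_trans tc cs).
- have st : phi (src e) < phi (tgt e) by apply: lt_le_trans ct.
  have -> : src e != tgt e by apply: contraTneq st => ->; rewrite ltxx.
  by rewrite add0r subr_ge0 ltW.
- by rewrite addr0.
Qed.

Lemma edge_drop_le_Mnorm phi a b :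
  adj src tgt a b -> phi a - phi b <= Mnorm (laplacian src tgt phi).
Proof.
case/existsP=> e0 e0ab.
have [ab|ba] := leP (phi a) (phi b).
  by apply: le_trans (Mnorm_ge0 _); rewrite subr_le0.
apply: le_trans (Mnorm_ge_sum _ (superlevel phi (phi a))) => /=.
apply: le_trans (ler_norm _); rewrite sum_laplacian (bigD1 e0) //=.
have flow_e0 : edge_flow phi (superlevel phi (phi a)) e0 = phi a - phi b.
  have ba' : b != a by apply: contraTneq ba => ->; rewrite ltxx.
  rewrite /edge_flow !inE; case/orP: e0ab => /andP[/eqP-> /eqP->];
  by rewrite lexx (leNgt (phi a) (phi b)) ba ?ba' ?addr0 ?add0r.
by rewrite flow_e0 lerDl sumr_ge0 // => e _; apply: edge_flow_superlevel_ge0.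
Qed.

Lemma path_drop_le_Mnorm phi x (t : seq V) :
  path (adj src tgt) x t ->
  phi x - phi (last x t) <= Mnorm (laplacian src tgt phi) * (size t)%:R.
Proof.
elim: t x => [|y t IH] x /=; first by rewrite subrr mulr0.
case/andP=> xy yt; rewrite -(subrKA (phi y)) -addn1 natrD mulrDr mulr1 addrC.
by apply: lerD; [apply: IH | apply: edge_drop_le_Mnorm].
Qed.

End Laplacian.

Section Distance.
Variables (V E : finType) (src tgt : E -> V).

Lemma walk_of_len_gdist (u w : V) :
  connect (adj src tgt) u w -> walk_of_len src tgt u w (gdist src tgt u w).
Proof.
case/connectP=> p p_path ->; case: (shortenP p_path) => q q_path q_uniq _.
have has_walk : has (walk_of_len src tgt u (last u q)) (iota 0 #|V|).
  apply/hasP; exists (size q).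
    by rewrite mem_iota add0n; move/card_uniqP: q_uniq => /= <-; apply: max_card.
  by apply/existsP; exists (in_tuple q); rewrite q_path eqxx.
have := nth_find 0%N has_walk; rewrite nth_iota ?add0n //.
by move: has_walk; rewrite has_find size_iota.
Qed.

Lemma gdist_le_diam (u w : V) : (gdist src tgt u w <= diam src tgt)%N.
Proof.
have le_row := @leq_bigmax V (fun w => gdist src tgt u w) w.
exact: leq_trans le_row (@leq_bigmax V (fun u => \max_(w : V) gdist src tgt u w) u).
Qed.

End Distance.

Theorem mainTheorem7 (R : realFieldType) (V E : finType) (src tgt : E -> V)
  (phi : V -> R) :
  connected_mg src tgt ->
  forall u w : V,
    phi u - phi w <= Mnorm (laplacian src tgt phi) * (diam src tgt)%:R.
Proof.
move=> conn u w.
have /existsP[t /andP[t_path /eqP t_last]] := walk_of_len_gdist (conn u w).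
rewrite -t_last; apply: le_trans (path_drop_le_Mnorm phi t_path) _.
rewrite size_tuple ler_wpM2l ?Mnorm_ge0 // ler_nat.
exact: gdist_le_diam.
Qed.
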